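(* In the contention game with $k=2$ channels under acknowledgement-based feedback and $n\in\{2,3,4\}$ players, the anonymous protocol $f^2$ (in every slot, regardless of history, a pending player transmits on each of the two channels with probability $1/2$ and never stays idle) is an equilibrium protocol, with expected latency of each player equal to $2$, $8/3$ and $4$ for $n=2,3,4$ respectively.
   Context: Contention game: $n$ players, channel set $K=\{1,\dots,k\}$, discrete slots $t=1,2,\dots$; each player has one packet and is initially pending. In each slot a pending player chooses (possibly at random) an action in $\{0,1,\dots,k\}$ ($0$ = no transmission, $a$ = transmit on channel $a$). A lone transmitter on a channel succeeds and leaves; two or more transmitters on a channel collide and remain pending. Latency $T_i$ = slot of player $i$'s successful transmission; players minimize expected latency. Acknowledgement-based feedback: only a player who attempted transmission learns whether she succeeded; decision rules depend only on the personal action history. A protocol is a sequence of such decision rules; an anonymous protocol is used by all players and does not depend on identity. It is an equilibrium protocol if, when all players use it, no player at any slot and after any history can decrease her conditional expected latency by unilaterally deviating. *)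

From HB Require Import structures.
From mathcomp Require Import all_boot all_order all_algebra.
From mathcomp Require Import all_classical all_reals all_analysis.
Set Implicit Arguments. Unset Strict Implicit. Unset Printing Implicit Defensive.
Import Order.TTheory GRing.Theory Num.Theory.
Local Open Scope ring_scope.

(** Contention game with [n] players and [k] channels.
    Actions: [0] = idle, [a : 1..k] = transmit on channel [a]. *)
Section Game.
Variables (R : realType) (n k : nat).

Definition action := 'I_k.+1.

(** Personal history of a pending player: the sequence of her past actions
    (while pending, every attempted transmission failed, so this is the whole
    personal information under acknowledgement-based feedback).  Its size is
    the current slot minus one. *)
Definition history := seq action.

(** A decision rule (= a protocol indexed by the personal history, which also
    determines the slot): a probability distribution over actions. *)
Definition rule := history -> action -> R.

Definition is_rule (f : rule) : Prop :=
  forall h, (forall a, 0 <= f h a) /\ \sum_(a : action) f h a = 1.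

(** Global state after some slots: [None] = player has left (succeeded),
    [Some h] = pending with personal history [h]. *)
Definition state := {ffun 'I_n -> option history}.

Definition init_state : state := [ffun=> Some [::]].

Definition profile := {ffun 'I_n -> action}.

Definition succeeds (s : state) (a : profile) (j : 'I_n) : bool :=
  (a j != ord0) &&
  [forall m, (m != j) ==> ~~ ((s m != None) && (a m == a j))].

Definition step (s : state) (a : profile) : state :=
  [ffun j => match s j with
             | None => None
             | Some h => if succeeds s a j then None else Some (rcons h (a j))
             end].

Definition profile_prob (P : 'I_n -> rule) (s : state) (a : profile) : R :=
  \prod_(j : 'I_n) match s j with
                   | None => (a j == ord0)%:R
                   | Some h => P j h (a j)
                   end.

Fixpoint dist_at (P : 'I_n -> rule) (t : nat) : seq (R * state) :=
  match t with
  | 0 => [:: (1, init_state)]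
  | t'.+1 => flatten [seq [seq (ps.1 * profile_prob P ps.2 a, step ps.2 a)
                          | a <- enum {: profile}] | ps <- dist_at P t']
  end.

(** Probability that player [i] is still pending after [t] slots, i.e. P(T_i > t). *)
Definition pending_prob (P : 'I_n -> rule) (i : 'I_n) (t : nat) : R :=
  \sum_(ps <- dist_at P t) (if ps.2 i is Some _ then ps.1 else 0).

Definition deviate (f : rule) (i : 'I_n) (g : rule) : 'I_n -> rule :=
  fun j => if j == i then g else f.

Definition forced (h : history) (g : rule) : rule :=
  fun h' => if (size h' < size h)%N then (fun a => (a == nth ord0 h (size h'))%:R)
            else g h'.

(** Conditional expected latency of player [i], given that at slot [size h + 1]
    she is pending with personal history [h], when she uses [g] from then on
    and all other players use [f]:
      E[T_i | hist] = size h + sum_{t >= size h} P(T_i > t | hist). *)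
Definition cond_latency (f : rule) (i : 'I_n) (h : history) (g : rule) : \bar R :=
  let P := deviate f i (forced h g) in
  ((size h)%:R)%:E +
  (\sum_(size h <= t <oo) ((pending_prob P i t) / (pending_prob P i (size h)))%:E)%E.

(** The history [h] can occur for player [i] (positive probability of being
    pending with history [h] given her own actions [h]; this does not depend
    on her continuation rule). *)
Definition possible_history (f : rule) (i : 'I_n) (h : history) : Prop :=
  0 < pending_prob (deviate f i (forced h f)) i (size h).

Definition equilibrium (f : rule) : Prop :=
  is_rule f /\
  forall (i : 'I_n) (h : history), possible_history f i h ->
  forall g : rule, is_rule g -> (cond_latency f i h f <= cond_latency f i h g)%E.

End Game.

Definition f2 (R : realType) : rule R 2 :=
  fun _ a => if a == ord0 then 0 else 2^-1.

From HB Require Import structures.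
From mathcomp Require Import all_boot all_order all_algebra.
From mathcomp Require Import all_classical all_reals all_analysis.
Import Order.TTheory GRing.Theory Num.Theory.
Set Implicit Arguments. Unset Strict Implicit. Unset Printing Implicit Defensive.
Local Open Scope ring_scope.

(* Let V m be the expected remaining latency of
   a pending player when she and m other pending players all follow f^2:
   V 0 = 1, V 1 = 2, V 2 = 8/3, V 3 = 4.  The potential of player i is V applied
   to the number of other pending players while i is pending, and 0 afterwards.
   For n <= 4 a finite computation shows that in one slot, whatever i does while
   the others follow f^2, the expected potential decreases by at most 1, and by
   exactly 1 when i transmits, as f^2 always does.  Summing over slots, the
   conditional expected remaining latency is at least the conditional expected
   potential under every continuation, with equality under f^2; the potential
   left after many slots is negligible, being at most 4 times the probability
   of still being pending. *)

Lemma ler_of_add_divn (R : archiRealFieldType) (x y c : R) : 0 <= c ->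
  (forall d : nat, (0 < d)%N -> x <= y + c / d%:R) -> x <= y.
Proof.
move=> c_ge0 le_xy; apply/ler_addgt0Pr => eps eps_gt0.
set d := (Num.Def.archi_bound (c / eps)).+1.
apply: le_trans (le_xy d isT) _; rewrite lerD2l ler_pdivrMr ?ltr0Sn //.
rewrite mulrC -ler_pdivrMr // ltW // (lt_le_trans (archi_boundP _)) ?ler_nat //.
by rewrite divr_ge0 // ltW.
Qed.

Section PotentialSeries.
Variables (R : realType) (e p : nat -> R) (L : nat).
Hypothesis p_ge0 : forall t, 0 <= p t.

Let partial_le_series T :
  ((\sum_(L <= t < T) p t)%:E <= \sum_(L <= t <oo) (p t)%:E)%E.
Proof. by rewrite -sumEFin; apply: nneseries_lim_ge => t _ _; rewrite lee_fin. Qed.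

Lemma nneseries_le_potential :
  (forall t, 0 <= e t) -> (forall t, (L <= t)%N -> p t = e t - e t.+1) ->
  (\sum_(L <= t <oo) (p t)%:E <= (e L)%:E)%E.
Proof.
move=> e_ge0 p_drop; apply: lime_le.
  by apply: is_cvg_ereal_nneg_natsum => t _; rewrite lee_fin.
apply: nearW => T; rewrite sumEFin lee_fin.
have [TL|LT] := leqP T L; first by rewrite big_geq.
have -> : \sum_(L <= t < T) p t = - \sum_(L <= t < T) (e t.+1 - e t).
  by rewrite -sumrN; apply: eq_big_nat => t /andP[Lt _]; rewrite opprB p_drop.
rewrite telescope_sumr; last exact: ltnW.
by rewrite opprB lerBlDr lerDl.
Qed.

Lemma potential_le_nneseries (C : R) : 0 <= C ->
  (forall t, p t.+1 <= p t) -> (forall t, e t <= C * p t) ->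
  (forall t, (L <= t)%N -> e t - e t.+1 <= p t) ->
  ((e L)%:E <= \sum_(L <= t <oo) (p t)%:E)%E.
Proof.
move=> C_ge0 p_succ e_le e_drop.
have p_noninc : {homo p : s t / (s <= t)%N >-> t <= s}.
  by apply: homo_leq => // [x y z yx zy]; exact: le_trans zy yx.
have telescope d : e L <= \sum_(L <= t < L + d) p t + e (L + d).
  rewrite -lerBlDr -opprB -telescope_sumr ?leq_addr // -sumrN.
  by apply: ler_sum_nat => t /andP[Lt _]; rewrite opprB e_drop.
(* As [p] is nonincreasing, the residual [e (L + d) <= C * p (L + d)] is at most
   [C / d] times the partial sum. *)
have tail d : d%:R * p (L + d) <= \sum_(L <= t < L + d) p t.
  have := sumr_const_nat (L + d) L (p (L + d)); rewrite addKn mulr_natl => <-.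
  by apply: ler_sum_nat => t /andP[_ lt]; apply/p_noninc/ltnW.
have S_ge0 : (0 <= \sum_(L <= t <oo) (p t)%:E)%E.
  by apply: nneseries_ge0 => t _ _; rewrite lee_fin.
move: partial_le_series S_ge0.
case: (\sum_(L <= t <oo) (p t)%:E)%E => [s||] partial_le //; last by move=> _; rewrite leey.
rewrite !lee_fin in partial_le * => s_ge0.
apply: (@ler_of_add_divn _ _ _ (C * s)) => [|d d_gt0]; first exact: mulr_ge0.
apply: le_trans (telescope d) _; apply: lerD; first exact: partial_le.
apply: le_trans (e_le _) _; rewrite -mulrA ler_wpM2l // ler_pdivlMr ?ltr0n //.
by rewrite mulrC; apply: le_trans (tail d) (partial_le _).
Qed.

End PotentialSeries.

Section Dynamics.
Variables (R : realType) (n k : nat) (P : 'I_n -> rule R k).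

Definition state_expect (t : nat) (G : state n k -> R) : R :=
  \sum_(ps <- dist_at P t) ps.1 * G ps.2.

Lemma state_expect_succ t G : state_expect t.+1 G =
  state_expect t (fun s => \sum_(a : profile n k) profile_prob P s a * G (step s a)).
Proof.
rewrite /state_expect /= big_flatten big_map; apply: eq_bigr => ps _.
by rewrite big_map big_enum mulr_sumr; apply: eq_bigr => a _; rewrite mulrA.
Qed.

Lemma size_dist_at_history t ps j h :
  ps \in dist_at P t -> ps.2 j = Some h -> size h = t.
Proof.
elim: t ps h => [|t IH] ps h /=; first by rewrite inE => /eqP -> /=; rewrite ffunE => -[<-].
case/flatten_mapP => ps0 ps0_in /mapP[a _ ->] /=; rewrite ffunE.
case ps0j: (ps0.2 j) => [h0|] //; case: succeeds => //= -[<-].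
by rewrite size_rcons (IH _ _ ps0_in ps0j).
Qed.

Lemma pending_probE i t :
  pending_prob P i t = state_expect t (fun s => (s i != None)%:R).
Proof. by apply: eq_bigr => ps _; case: (ps.2 i) => [h|] /=; rewrite ?mulr1 ?mulr0. Qed.

Lemma state_expectZ t c G : state_expect t (fun s => c * G s) = c * state_expect t G.
Proof. by rewrite mulr_sumr; apply: eq_bigr => ps _; rewrite mulrCA. Qed.

Lemma state_expectB t G H :
  state_expect t (fun s => G s - H s) = state_expect t G - state_expect t H.
Proof. by rewrite -sumrB; apply: eq_bigr => ps _; rewrite mulrBr. Qed.

Hypothesis P_rule : forall j, is_rule (P j).

Lemma profile_prob_ge0 s a : 0 <= profile_prob P s a.
Proof.
apply: prodr_ge0 => j _; case: (s j) => [h|]; last exact: ler0n.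
by have [->] := P_rule j h.
Qed.

Lemma sum_profile_prob s : \sum_(a : profile n k) profile_prob P s a = 1.
Proof.
pose F j (x : action k) := if s j is Some h then P j h x else (x == ord0)%:R.
rewrite (eq_bigr (fun a : profile n k => \prod_j F j (a j))) // -bigA_distr_bigA.
rewrite big1 // => j _; rewrite /F.
case: (s j) => [h|]; first by have [_ ->] := P_rule j h.
by rewrite (bigD1 ord0) //= big1 ?addr0 // => a /negbTE ->.
Qed.

Lemma dist_at_ge0 t ps : ps \in dist_at P t -> 0 <= ps.1.
Proof.
elim: t ps => [|t IH] ps /=; first by rewrite inE => /eqP ->.
case/flatten_mapP => ps0 ps0_in /mapP[a _ ->] /=.
by rewrite mulr_ge0 ?IH ?profile_prob_ge0.
Qed.

Lemma ler_state_expect t G H : (forall ps, ps \in dist_at P t -> G ps.2 <= H ps.2) ->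
  state_expect t G <= state_expect t H.
Proof.
move=> GH; rewrite /state_expect big_seq [leRHS]big_seq.
by apply: ler_sum => ps ps_in; rewrite ler_wpM2l ?GH ?(dist_at_ge0 ps_in).
Qed.

Lemma state_expect_ge0 t G : (forall s, 0 <= G s) -> 0 <= state_expect t G.
Proof.
move=> G_ge0; rewrite /state_expect big_seq sumr_ge0 // => ps ps_in.
by rewrite mulr_ge0 ?(dist_at_ge0 ps_in).
Qed.

Lemma pending_prob_ge0 i t : 0 <= pending_prob P i t.
Proof. by rewrite pending_probE state_expect_ge0. Qed.

Lemma pending_prob_succ_le i t : pending_prob P i t.+1 <= pending_prob P i t.
Proof.
rewrite !pending_probE state_expect_succ; apply: ler_state_expect => -[_ s] _ /=.
apply: le_trans (_ : _ <= \sum_a profile_prob P s a * (s i != None)%:R) _.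
  apply: ler_sum => a _; rewrite ler_wpM2l ?profile_prob_ge0 // ler_nat.
  by case si: (s i); rewrite ?leq_b1 // ffunE si.
by rewrite -mulr_suml sum_profile_prob mul1r.
Qed.

End Dynamics.

Lemma eq_dist_at (R : realType) (n k : nat) (P Q : 'I_n -> rule R k) t :
  (forall j h, (size h < t)%N -> P j h = Q j h) -> dist_at P t = dist_at Q t.
Proof.
elim: t => [|t IH] //= PQ; rewrite IH => [|j h lt]; last by apply/PQ/ltnW.
congr flatten; apply/eq_in_map => ps ps_in; apply/eq_map => a.
congr (_ * _, _); apply: eq_bigr => j _; case sj: (ps.2 j) => [h|] //.
by rewrite PQ // (size_dist_at_history ps_in sj).
Qed.

Section Rules.
Variables (R : realType) (k : nat).

Lemma forced_rule (h : history k) (g : rule R k) : is_rule g -> is_rule (forced h g).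
Proof.
move=> g_rule h'; rewrite /forced; case: ifP => _; last exact: g_rule.
split=> [a|]; first exact: ler0n.
by rewrite (bigD1 (nth ord0 h (size h'))) //= eqxx big1 ?addr0 // => a /negbTE ->.
Qed.

Lemma deviate_rule n (f g : rule R k) (i : 'I_n) :
  is_rule f -> is_rule g -> forall j, is_rule (deviate f i g j).
Proof. by rewrite /deviate => f_rule g_rule j; case: eqP. Qed.

End Rules.

Lemma f2_rule (R : realType) : is_rule (f2 R).
Proof.
move=> h; split=> [a|]; first by rewrite /f2; case: eqP; rewrite ?invr_ge0 ?ler0n.
by rewrite !big_ord_recr big_ord0 /= /f2 /= !add0r [RHS](splitr 1) div1r.
Qed.

Fixpoint all_words (T : Type) (xs : seq T) (m : nat) : seq (seq T) :=
  if m is m'.+1 then [seq x :: w | x <- xs, w <- all_words xs m'] else [:: [::]].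

Lemma mem_all_words (T : eqType) (xs : seq T) m w :
  (w \in all_words xs m) = (size w == m) && all (mem xs) w.
Proof.
elim: m w => [|m IH] [|x w] //=; first by apply/allpairsP => -[[y w'] []].
apply/allpairsP/and3P => [[[y w'] /= [y_in w'_in [-> ->]]]|[sz x_in w_in]].
  by move: w'_in; rewrite IH eqSS => /andP[].
by exists (x, w); rewrite IH -eqSS sz.
Qed.

Lemma all_words_uniq (T : eqType) (xs : seq T) m : uniq xs -> uniq (all_words xs m).
Proof.
move=> xs_uniq; elim: m => //= m IH.
by apply: allpairs_uniq => // -[x w] [y w'] _ _ [-> ->].
Qed.

(* The one-step inequalities are decided by [vm_compute], which cannot
   enumerate finfun types: players are encoded as indices in [iota 0 n],
   pending sets as [seq bool] and action profiles as words over [0; 1; 2]. *)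
Section ListModel.
Variable n : nat.
Implicit Types (b : seq bool) (t : seq nat) (i j : nat).

Definition succeedsL b t j : bool :=
  (nth 0 t j != 0)%N &&
  all (fun m => (m == j) || ~~ (nth false b m && (nth 0 t m == nth 0 t j))) (iota 0 n).

Definition stepL b t : seq bool :=
  [seq nth false b j && ~~ succeedsL b t j | j <- iota 0 n].

Definition f2_latency (m : nat) : rat := nth 0 [:: 1; 2%:R; 8%:R / 3%:R; 4%:R] m.

Lemma f2_latency_bounds m : 0 <= f2_latency m <= 4.
Proof.
have [lt_m4|le4m] := ltnP m 4; last by rewrite /f2_latency nth_default.
by case: m lt_m4 => [|[|[|[|m]]]] //; vm_compute.
Qed.

Definition potentialL i b : rat :=
  if nth false b i then f2_latency (count (fun j => (j != i) && nth false b j) (iota 0 n))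
  else 0.

Definition f2_probL (pending : bool) (x : nat) : rat :=
  if pending then (x != 0)%N%:R / 2 else (x == 0)%N%:R.

Definition others_probL i b t : rat :=
  \prod_(0 <= j < n | j != i) f2_probL (nth false b j) (nth 0 t j).

Definition next_potentialL i b c : rat :=
  \sum_(t <- all_words [:: 0; 1; 2]%N n | nth 0 t i == c)
    others_probL i b t * potentialL i (stepL b t).

Definition potential_step_ok i b c : bool :=
  (potentialL i b - 1 <= next_potentialL i b c) &&
  ((c == 0)%N || (next_potentialL i b c == potentialL i b - 1)).

Definition potential_ok : bool :=
  all (fun b => all (fun i => nth false b i ==> all (potential_step_ok i b) (iota 0 3))
                    (iota 0 n))
      (all_words [:: false; true] n).

Lemma potential_okP b i c : potential_ok -> size b = n -> (i < n)%N -> nth false b i ->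
  (c < 3)%N -> potential_step_ok i b c.
Proof.
move=> /allP ok sz_b lt_in b_i lt_c3.
have /ok/allP/(_ i) : b \in all_words [:: false; true] n.
  by rewrite mem_all_words sz_b eqxx; apply/allP => -[].
by rewrite mem_iota lt_in b_i => /(_ isT)/allP; apply; rewrite mem_iota.
Qed.

End ListModel.

Lemma potential_ok_234 n : n \in [:: 2; 3; 4]%N -> potential_ok n.
Proof.
rewrite /potential_ok /potential_step_ok /next_potentialL /others_probL unlock.
by rewrite !inE => /or3P[] /eqP ->; vm_compute.
Qed.

Section Encoding.
Variable n : nat.

Definition pendingL (s : state n 2) : seq bool := [seq s j != None | j <- enum 'I_n].
Definition actionsL (a : profile n 2) : seq nat := [seq val (a j) | j <- enum 'I_n].
Definition profile_of_word (w : seq nat) : profile n 2 :=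
  [ffun j : 'I_n => inord (nth 0 w j)].

Local Notation words := (all_words [:: 0; 1; 2]%N n).

Lemma size_pendingL s : size (pendingL s) = n.
Proof. by rewrite size_map size_enum_ord. Qed.

Lemma nth_pendingL s (j : 'I_n) : nth false (pendingL s) j = (s j != None).
Proof. by rewrite (nth_map j) ?size_enum_ord // nth_ord_enum. Qed.

Lemma nth_actionsL a (j : 'I_n) : nth 0 (actionsL a) j = a j.
Proof. by rewrite (nth_map j) ?size_enum_ord // nth_ord_enum. Qed.

Lemma actionsL_word a : actionsL a \in words.
Proof.
rewrite mem_all_words size_map size_enum_ord eqxx /=.
by apply/allP => _ /mapP[j _ ->]; case: (a j) => -[|[|[]]].
Qed.

Lemma nth_word_lt3 w j : w \in words -> (nth 0 w j < 3)%N.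
Proof.
rewrite mem_all_words => /andP[_ /allP w_in].
have [lt_jw|] := ltnP j (size w); last by move=> /(nth_default 0) ->.
by have := w_in _ (mem_nth 0 lt_jw); rewrite !inE => /or3P[] /eqP ->.
Qed.

Lemma actionsLK : cancel actionsL profile_of_word.
Proof. by move=> a; apply/ffunP => j; rewrite ffunE nth_actionsL inord_val. Qed.

Lemma profile_of_wordK w : w \in words -> actionsL (profile_of_word w) = w.
Proof.
move=> w_in; have := w_in; rewrite mem_all_words => /andP[/eqP sz_w _].
apply: (@eq_from_nth _ 0); first by rewrite size_map size_enum_ord sz_w.
move=> j; rewrite size_map size_enum_ord => lt_jn.
by rewrite -[j]/(val (Ordinal lt_jn)) nth_actionsL ffunE inordK // nth_word_lt3.
Qed.

Lemma big_profile_words (T : Type) (idx : T) (op : Monoid.com_law idx)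
    (Q : pred (profile n 2)) (F : profile n 2 -> T) :
  \big[op/idx]_(a | Q a) F a =
  \big[op/idx]_(w <- words | Q (profile_of_word w)) F (profile_of_word w).
Proof.
rewrite -(big_map profile_of_word Q F); apply: perm_big; apply: uniq_perm.
- exact: index_enum_uniq.
- rewrite map_inj_in_uniq ?all_words_uniq // => w w' w_in w'_in eq_ww'.
  by rewrite -(profile_of_wordK w_in) -(profile_of_wordK w'_in) eq_ww'.
- move=> a; rewrite mem_index_enum; symmetry; apply/mapP.
  by exists (actionsL a); rewrite ?actionsLK ?actionsL_word.
Qed.

Lemma succeedsE s a (j : 'I_n) : succeeds s a j = succeedsL n (pendingL s) (actionsL a) j.
Proof.
rewrite /succeeds /succeedsL nth_actionsL; congr andb.
apply/forallP/allP => [no_clash m | no_clash m].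
- rewrite mem_iota add0n => lt_mn; have := no_clash (Ordinal lt_mn).
  rewrite -[m]/(val (Ordinal lt_mn)) nth_pendingL !nth_actionsL val_eqE.
  by case: eqP.
- apply/implyP => ne_mj; have := no_clash m; rewrite mem_iota ltn_ord => /(_ isT).
  by rewrite nth_pendingL !nth_actionsL val_eqE (negbTE ne_mj).
Qed.

Lemma pendingL_step s a : pendingL (step s a) = stepL n (pendingL s) (actionsL a).
Proof.
apply: (@eq_from_nth _ false); first by rewrite size_pendingL size_map size_iota.
move=> j; rewrite size_pendingL => lt_jn.
rewrite (nth_map 0) ?size_iota // nth_iota // add0n.
rewrite -[j]/(val (Ordinal lt_jn)) !nth_pendingL -succeedsE ffunE.
by case: (s _) => [h|] //=; case: succeeds.
Qed.

End Encoding.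

Section F2Potential.
Variables (R : realType) (n : nat) (i : 'I_n) (r : rule R 2).
Local Notation P := (deviate (f2 R) i r).

Definition potential (s : state n 2) : R := ratr (potentialL n i (pendingL s)).

Lemma potential_bounds s : 0 <= potential s <= 4 * (s i != None)%:R.
Proof.
rewrite /potential /potentialL nth_pendingL; case: (s i) => [h|] /=; last first.
  by rewrite rmorph0 mulr0 lexx.
by rewrite mulr1 -(ratr_nat R 4) ler0q ler_rat f2_latency_bounds.
Qed.

Lemma potential_init : potential (init_state n 2) = ratr (f2_latency n.-1).
Proof.
rewrite /potential /potentialL nth_pendingL ffunE /=; congr (ratr (f2_latency _)).
rewrite (@eq_in_count _ _ (predC1 (i : nat))) => [|j]; last first.
  by rewrite mem_iota add0n => lt_jn; rewrite -[j]/(val (Ordinal lt_jn)) nth_pendingL ffunE andbT.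
have := count_predC (pred1 (i : nat)) (iota 0 n).
by rewrite count_uniq_mem ?iota_uniq // mem_iota ltn_ord size_iota add1n => /(congr1 predn).
Qed.

Lemma profile_probE (s : state n 2) h (a : profile n 2) : s i = Some h ->
  profile_prob P s a = r h (a i) * ratr (others_probL n i (pendingL s) (actionsL a)).
Proof.
move=> si; rewrite /profile_prob (bigD1 i) //= si /deviate eqxx; congr (_ * _).
rewrite /others_probL big_mkord rmorph_prod; apply: eq_bigr => j ne_ji.
rewrite (negbTE ne_ji) nth_pendingL nth_actionsL /f2_probL.
case: (s j) => [h'|] /=; last by rewrite rmorph_nat.
rewrite /f2 -val_eqE /=; case: eqP => _ /=; first by rewrite mul0r rmorph0.
by rewrite div1r fmorphV rmorph_nat.
Qed.

Lemma expect_potential_step (s : state n 2) h : s i = Some h ->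
  \sum_(a : profile n 2) profile_prob P s a * potential (step s a) =
  \sum_(c : 'I_3) r h c * ratr (next_potentialL n i (pendingL s) c).
Proof.
move=> si; rewrite (partition_big (fun a : profile n 2 => a i) xpredT) //=.
apply: eq_bigr => c _; rewrite /next_potentialL rmorph_sum mulr_sumr.
rewrite big_profile_words big_seq_cond [RHS]big_seq_cond.
apply: eq_big => [w|w /andP[w_in /eqP <-]].
  case w_in: (w \in _) => //=.
  by rewrite ffunE -val_eqE /= inordK // (nth_word_lt3 _ w_in).
rewrite (profile_probE _ si) /potential pendingL_step profile_of_wordK //.
by rewrite -mulrA -rmorphM.
Qed.

Hypotheses (n_ok : potential_ok n) (r_rule : is_rule r).

Lemma potential_none (s : state n 2) : s i = None -> potential s = 0.
Proof. by move=> si; rewrite /potential /potentialL nth_pendingL si rmorph0. Qed.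

Lemma potential_step_ok_pending (s : state n 2) h (c : 'I_3) : s i = Some h ->
  potential_step_ok n i (pendingL s) c.
Proof. by move=> si; apply: potential_okP; rewrite ?size_pendingL ?nth_pendingL ?si. Qed.

Lemma expect_potential_step_None (s : state n 2) : s i = None ->
  \sum_(a : profile n 2) profile_prob P s a * potential (step s a) = 0.
Proof. by move=> si; rewrite big1 // => a _; rewrite potential_none ?mulr0 // ffunE si. Qed.

Lemma potential_sub1_split (s : state n 2) h : s i = Some h ->
  potential s - (s i != None)%:R = \sum_(c : 'I_3) r h c * (potential s - 1).
Proof. by move=> si; have [_ r_sum1] := r_rule h; rewrite -mulr_suml r_sum1 mul1r si. Qed.

Lemma potential_step_ge (s : state n 2) :
  potential s - (s i != None)%:R <=
  \sum_(a : profile n 2) profile_prob P s a * potential (step s a).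
Proof.
case si: (s i) => [h|]; last by rewrite expect_potential_step_None // potential_none // subrr.
rewrite -si (potential_sub1_split si) (expect_potential_step si).
apply: ler_sum => c _; rewrite ler_wpM2l //; first exact: (r_rule h).1.
rewrite /potential -(rmorph1 (ratr : rat -> R)) -rmorphB ler_rat.
by have /andP[] := potential_step_ok_pending c si.
Qed.

Lemma potential_step_eq (s : state n 2) : (forall h, s i = Some h -> r h ord0 = 0) ->
  \sum_(a : profile n 2) profile_prob P s a * potential (step s a) =
  potential s - (s i != None)%:R.
Proof.
case si: (s i) => [h|] never_idle.
  rewrite -si (potential_sub1_split si) (expect_potential_step si); apply: eq_bigr => c _.
  have [->|ne_c0] := eqVneq c ord0; first by rewrite never_idle // !mul0r.
  have /andP[_] := potential_step_ok_pending c si.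
  by rewrite (negbTE (ne_c0 : val c != 0%N)) => /eqP ->; rewrite rmorphB rmorph1.
by rewrite expect_potential_step_None // potential_none // subrr.
Qed.

End F2Potential.

Arguments potential {R n} i s.

Section F2Latency.
Variables (R : realType) (n : nat) (i : 'I_n) (r : rule R 2).
Hypotheses (n_ok : potential_ok n) (r_rule : is_rule r).
Local Notation P := (deviate (f2 R) i r).
Local Notation pending t := (pending_prob P i t).
Local Notation expected_potential t := (state_expect P t (potential i)).

Let P_rule : forall j, is_rule (P j) := deviate_rule i (f2_rule R) r_rule.

Lemma expected_potential_bounds t : 0 <= expected_potential t <= 4 * pending t.
Proof.
rewrite pending_probE -state_expectZ (state_expect_ge0 P_rule) => [|s]; last first.
  by have /andP[] := potential_bounds R i s.
by apply: (ler_state_expect P_rule) => ps _; have /andP[] := potential_bounds R i ps.2.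
Qed.

Lemma expected_potential_drop t : expected_potential t - expected_potential t.+1 <= pending t.
Proof.
rewrite lerBlDl -lerBlDr pending_probE -state_expectB state_expect_succ.
by apply: (ler_state_expect P_rule) => ps _; apply: potential_step_ge.
Qed.

Lemma expected_potential_succ t : (forall h, size h = t -> r h ord0 = 0) ->
  expected_potential t.+1 = expected_potential t - pending t.
Proof.
move=> never_idle; rewrite pending_probE -state_expectB state_expect_succ.
apply: eq_big_seq => ps ps_in; rewrite potential_step_eq // => h ps_i.
exact/never_idle/(size_dist_at_history ps_in ps_i).
Qed.

Section Normalized.
Variable L : nat.
Hypothesis pending_L_gt0 : 0 < pending L.

Let p t := pending t / pending L.
Let e t := expected_potential t / pending L.

Let p_ge0 t : 0 <= p t.
Proof. exact: divr_ge0 (pending_prob_ge0 P_rule i t) (ltW pending_L_gt0). Qed.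

Lemma pending_series_ge : ((e L)%:E <= \sum_(L <= t <oo) (p t)%:E)%E.
Proof.
apply: (@potential_le_nneseries _ _ _ _ p_ge0 4) => // [t|t|t _].
- by rewrite ler_pM2r ?invr_gt0 ?pending_prob_succ_le.
- by rewrite /e /p mulrA ler_pM2r ?invr_gt0 //; have /andP[] := expected_potential_bounds t.
- by rewrite /e /p -mulrBl ler_pM2r ?invr_gt0 ?expected_potential_drop.
Qed.

Lemma pending_series_le : (forall h, (L <= size h)%N -> r h ord0 = 0) ->
  (\sum_(L <= t <oo) (p t)%:E <= (e L)%:E)%E.
Proof.
move=> never_idle; apply: (nneseries_le_potential p_ge0) => [t|t Lt].
  by rewrite /e divr_ge0 ?(ltW pending_L_gt0) //; have /andP[] := expected_potential_bounds t.
rewrite /p /e -mulrBl expected_potential_succ ?subKr // => h size_h.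
by apply: never_idle; rewrite size_h.
Qed.

End Normalized.
End F2Latency.

Section Equilibrium.
Variables (R : realType) (n : nat) (i : 'I_n).
Hypothesis n_ok : potential_ok n.

Definition continuation_value (h : history 2) : R :=
  let P := deviate (f2 R) i (forced h (f2 R)) in
  state_expect P (size h) (potential i) / pending_prob P i (size h).

Lemma cond_latency_f2 h : possible_history (f2 R) i h ->
  cond_latency (f2 R) i h (f2 R) = ((size h)%:R + continuation_value h)%:E.
Proof.
move=> h_pos; rewrite /cond_latency EFinD; congr (_ + _)%E.
have f2_forced_rule := forced_rule h (f2_rule R).
apply/le_anti/andP; split; last exact: pending_series_ge.
apply: pending_series_le => // h' le_hh'.
by rewrite /forced ltnNge le_hh' /= /f2 eqxx.
Qed.

Lemma cond_latency_ge h g : is_rule g -> possible_history (f2 R) i h ->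
  (((size h)%:R + continuation_value h)%:E <= cond_latency (f2 R) i h g)%E.
Proof.
move=> g_rule h_pos.
have same_past : dist_at (deviate (f2 R) i (forced h g)) (size h) =
                 dist_at (deviate (f2 R) i (forced h (f2 R))) (size h).
  by apply: eq_dist_at => j h' lt_h'h; rewrite /deviate; case: eqP; rewrite //= /forced lt_h'h.
have same_pending : pending_prob (deviate (f2 R) i (forced h g)) i (size h) =
                    pending_prob (deviate (f2 R) i (forced h (f2 R))) i (size h).
  by rewrite /pending_prob same_past.
have same_potential : state_expect (deviate (f2 R) i (forced h g)) (size h) (potential i) =
                      state_expect (deviate (f2 R) i (forced h (f2 R))) (size h) (potential i).
  by rewrite /state_expect same_past.
rewrite /cond_latency EFinD leeD2l // /continuation_value /= -same_pending -same_potential.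
by apply: pending_series_ge => //; [exact: forced_rule | rewrite same_pending].
Qed.

Lemma f2_no_profitable_deviation h g : is_rule g -> possible_history (f2 R) i h ->
  (cond_latency (f2 R) i h (f2 R) <= cond_latency (f2 R) i h g)%E.
Proof. by move=> g_rule h_pos; rewrite cond_latency_f2 // cond_latency_ge. Qed.

Lemma cond_latency_f2_init : cond_latency (f2 R) i [::] (f2 R) = (ratr (f2_latency n.-1))%:E.
Proof.
have pending0 : pending_prob (deviate (f2 R) i (forced [::] (f2 R))) i 0 = 1.
  by rewrite /pending_prob /= big_seq1 ffunE.
rewrite cond_latency_f2 /possible_history /continuation_value /= ?pending0 //.
by rewrite /state_expect /= big_seq1 mul1r potential_init divr1 add0r.
Qed.

End Equilibrium.

Theorem theorem3 (R : realType) (n : nat) :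
  n \in [:: 2; 3; 4]%N ->
  @equilibrium R n 2 (f2 R) /\
  forall i : 'I_n,
    cond_latency (f2 R) i [::] (f2 R) =
    ((if n == 2%N then 2 else if n == 3%N then 8 / 3 else 4 : R))%:E.
Proof.
move=> n_234; have n_ok := potential_ok_234 n_234.
split=> [|i].
  split=> [|i h h_pos g g_rule]; first exact: f2_rule.
  exact: f2_no_profitable_deviation.
rewrite cond_latency_f2_init //; congr EFin; move: n_234.
by rewrite !inE => /or3P[] /eqP -> /=; rewrite /f2_latency /= ?rmorphM ?fmorphV !rmorph_nat.
Qed.
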